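(* Let ${\mathsf P}$ be a finite point process on a Polish space $X$, let ${\mathbf T}$ be a thinning kernel, let ${\mathsf P}'$ be the thinning of ${\mathsf P}$, and let ${\mathbf Q}$ be a condensation kernel of ${\mathsf P}$ with respect to ${\mathbf T}$. Then for every measurable $g:\mathcal M_f(X)^4\to[0,\infty)$, $$\int g(\kappa,\mu,\lambda,\nu)\,{\mathbf T}_\nu(\{\kappa\})\,{\mathbf Q}_\lambda(\mathrm d\nu)\,{\mathbf T}_\mu(\mathrm d\lambda)\,{\mathbf Q}_\kappa(\mathrm d\mu)\,{\mathsf P}'(\mathrm d\kappa)$$ $$=\int g(\kappa,\mu,\lambda,\nu)\,{\mathbf T}_\mu(\{\kappa\})\,{\mathbf Q}_\lambda(\mathrm d\mu)\,{\mathbf T}_\nu(\mathrm d\lambda)\,{\mathbf Q}_\kappa(\mathrm d\nu)\,{\mathsf P}'(\mathrm d\kappa).$$ In other words, for ${\mathsf P}'$-a.e. $\kappa$, $${\mathbf T}_\nu(\{\kappa\})\,{\mathbf Q}_\lambda(\mathrm d\nu)\,{\mathbf T}_\mu(\mathrm d\lambda)\,{\mathbf Q}_\kappa(\mathrm d\mu)={\mathbf T}_\mu(\{\kappa\})\,{\mathbf Q}_\lambda(\mathrm d\mu)\,{\mathbf T}_\nu(\mathrm d\lambda)\,{\mathbf Q}_\kappa(\mathrm d\nu).$$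
   Context: $\mathcal M_f(X)$ denotes the set of finite counting measures on $X$, with the $\sigma$-algebra generated by $\mu\mapsto\mu(B)$. A finite point process is a probability measure on $\mathcal M_f(X)$. A thinning kernel is a stochastic kernel $\mu\mapsto{\mathbf T}_\mu$ from $\mathcal M_f(X)$ to $\mathcal M_f(X)$ with ${\mathbf T}_\mu$ concentrated on $\{\eta:\eta\le\mu\}$. The thinning of ${\mathsf P}$ is ${\mathsf P}'=\int{\mathbf T}_\mu\,{\mathsf P}(\mathrm d\mu)$. A condensation kernel is a stochastic kernel $\eta\mapsto{\mathbf Q}_\eta$ concentrated on $\{\mu:\mu\ge\eta\}$ such that $$\iint g(\eta,\mu)\,{\mathbf T}_\mu(\mathrm d\eta)\,{\mathsf P}(\mathrm d\mu)=\iint g(\eta,\mu)\,{\mathbf Q}_\eta(\mathrm d\mu)\,{\mathsf P}'(\mathrm d\eta)$$ for all non-negative measurable $g$. *)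

From HB Require Import structures.
From mathcomp Require Import all_boot all_order all_algebra finmap.
From mathcomp Require Import all_classical all_reals all_analysis measurable_realfun.
Set Implicit Arguments. Unset Strict Implicit. Unset Printing Implicit Defensive.
Import Order.TTheory GRing.Theory Num.Theory.
Local Open Scope classical_set_scope.
Local Open Scope ring_scope.

Definition polish (R : realType) (X : topologicalType) : Prop :=
  (exists D : set X, countable D /\ closure D = [set: X]) /\
  exists d : X -> X -> R,
    (forall x y, 0 <= d x y) /\
    (forall x y, d x y = 0 <-> x = y) /\
    (forall x y, d x y = d y x) /\
    (forall x y z, d x z <= d x y + d y z) /\
    (forall A : set X, open A <->
       (forall x, A x -> exists2 e : R, 0 < e & [set y | d x y < e] `<=` A)) /\
    (forall u : nat -> X,
           (forall e : R, 0 < e -> exists N : nat, forall m n : nat,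
              (N <= m)%N -> (N <= n)%N -> d (u m) (u n) < e) ->
           exists l : X, u @ \oo --> l).

Definition borel_set (X : topologicalType) (B : set X) : Prop :=
  <<s [set A : set X | open A] >> B.

(* A finite counting measure on X is a finite sum of Dirac masses; it is
   represented by its finitely supported multiplicity function x |-> mu {x}. *)
Definition cmeas (X : choiceType) := {fsfun X -> nat with 0%N}.
HB.instance Definition _ (X : choiceType) := Choice.on (cmeas X).
HB.instance Definition _ (X : choiceType) :=
  isPointed.Build (cmeas X) ([fsfun] : {fsfun X -> nat with 0%N}).

Definition cm_eval (X : choiceType) (mu : cmeas X) (B : set X) : nat :=
  (\sum_(x <- finsupp mu | x \in B) mu x)%N.

Definition cm_le (X : topologicalType) (eta mu : cmeas X) : Prop :=
  forall B : set X, borel_set B -> (cm_eval eta B <= cm_eval mu B)%N.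

Definition Mf_gen (X : topologicalType) : set (set (cmeas X)) :=
  [set S | exists (B : set X) (A : set nat),
     borel_set B /\ S = (fun mu : cmeas X => cm_eval mu B) @^-1` A].

Definition Mf (X : topologicalType) := g_sigma_algebraType (@Mf_gen X).

Definition thinning_kernel (R : realType) (X : topologicalType)
    (T : R.-pker (Mf X) ~> (Mf X)) : Prop :=
  forall mu : Mf X, T mu [set eta : Mf X | cm_le eta mu] = 1%E.

Definition thinning_of (R : realType) (X : topologicalType)
    (P : probability (Mf X) R) (T : R.-pker (Mf X) ~> (Mf X))
    (P' : probability (Mf X) R) : Prop :=
  forall A : set (Mf X), measurable A -> P' A = (\int[P]_mu T mu A)%E.

Definition condensation_kernel (R : realType) (X : topologicalType)
    (P : probability (Mf X) R) (T : R.-pker (Mf X) ~> (Mf X))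
    (P' : probability (Mf X) R) (Q : R.-pker (Mf X) ~> (Mf X)) : Prop :=
  (forall eta : Mf X, Q eta [set mu : Mf X | cm_le eta mu] = 1%E) /\
  (forall g : (Mf X * Mf X)%type -> \bar R,
     (forall z, 0 <= g z)%E -> measurable_fun [set: (Mf X * Mf X)%type] g ->
     (\int[P]_mu \int[T mu]_eta g (eta, mu) =
      \int[P']_eta \int[Q eta]_mu g (eta, mu))%E).

From HB Require Import structures.
From mathcomp Require Import all_boot all_order all_algebra finmap.
From mathcomp Require Import all_classical all_reals all_analysis measurable_realfun.
From mathcomp Require Import lra.
Import Order.TTheory GRing.Theory Num.Theory.
Local Open Scope classical_set_scope.
Local Open Scope ring_scope.

(* The condensation identity says that P(dmu) T_mu(deta) and P'(deta) Q_eta(dmu)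
   are the same law on pairs.  Read backwards it turns P'(dk) Q_k(dm) T_m(dl)
   into P(dm) T_m(dk) T_m(dl), which is symmetric in k and l; read forwards
   again it re-centres the integral at l:
     P'(dk) Q_k(dm) T_m(dl) Q_l(dn) = P'(dl) Q_l(dm) Q_l(dn) T_m(dk).
   After re-centring, both sides of the theorem are integrals against
   P'(dl) Q_l(dm) Q_l(dn), which is symmetric in m and n, of
   int T_m(dk) g T_n{k}  and  int T_n(dk) g T_m{k}  respectively; these agree,
   both being the integral of g over the diagonal for T_m (x) T_n.  The Polish
   hypothesis only serves to make that diagonal measurable: a finite counting
   measure on a separable metric space is determined by its values on the
   countably many balls of radius 1/(j+1) around the points of a countable
   dense set. *)

(* [k x] alone carries no canonical probability (hence sigma-finite)
   structure, which Fubini-Tonelli needs. *)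
Section pker_at.
Context {d d' : measure_display} {X : measurableType d}
  {Y : measurableType d'} {R : realType} (k : R.-pker X ~> Y) (x : X).

Definition pker_at : set Y -> \bar R := k x.

HB.instance Definition _ := Measure.on pker_at.

Let pker_at_setT : pker_at [set: Y] = 1%E.
Proof. exact: prob_kernel. Qed.

HB.instance Definition _ :=
  Measure_isProbability.Build _ _ _ pker_at pker_at_setT.

End pker_at.

Lemma pkernel_fubini_tonelli {d1 d2 d3 d4 : measure_display}
    {X1 : measurableType d1} {Y1 : measurableType d2}
    {X2 : measurableType d3} {Y2 : measurableType d4} {R : realType}
    (k1 : R.-pker X1 ~> Y1) (k2 : R.-pker X2 ~> Y2) (x1 : X1) (x2 : X2)
    (f : Y1 * Y2 -> \bar R) :
  measurable_fun [set: Y1 * Y2] f -> (forall z, 0 <= f z)%E ->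
  (\int[k1 x1]_y1 \int[k2 x2]_y2 f (y1, y2) =
   \int[k2 x2]_y2 \int[k1 x1]_y1 f (y1, y2))%E.
Proof.
exact: (fubini_tonelli (m1 := pker_at k1 x1) (m2 := pker_at k2 x2) f).
Qed.

Section kpullback.
Context {d1 d2 d3 : measure_display} {W : measurableType d1}
  {Y : measurableType d2} {Z : measurableType d3} {R : realType}
  (k : R.-fker Y ~> Z) {p : W -> Y}.

(* [mp] is an argument so that the kernel structures below can be inferred
   from [kpullback k mp]. *)
Definition kpullback (mp : measurable_fun [set: W] p) (w : W)
  : {measure set Z -> \bar R} := k (p w).

Variable mp : measurable_fun [set: W] p.

Let measurable_kpullback U :
  measurable U -> measurable_fun [set: W] (kpullback mp ^~ U).
Proof. by move=> mU; exact: measurableT_comp (measurable_kernel k U mU) mp. Qed.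

HB.instance Definition _ :=
  isKernel.Build _ _ _ _ _ (kpullback mp) measurable_kpullback.

Let kpullback_uub : measure_fam_uub (kpullback mp).
Proof. by have [r kr] := measure_uub k; exists r => w; exact: kr. Qed.

HB.instance Definition _ :=
  Kernel_isFinite.Build _ _ _ _ _ (kpullback mp) kpullback_uub.

End kpullback.

Lemma measurable_fun_integral_kernel_comp {d1 d2 d3 : measure_display}
    {W : measurableType d1} {Y : measurableType d2} {Z : measurableType d3}
    {R : realType} (k : R.-fker Y ~> Z) {p : W -> Y} {h : W * Z -> \bar R} :
  measurable_fun [set: W] p ->
  (forall z, 0 <= h z)%E -> measurable_fun [set: W * Z] h ->
  measurable_fun [set: W] (fun w => \int[k (p w)]_z h (w, z))%E.
Proof.
by move=> mp; exact: measurable_fun_integral_finite_kernel h (kpullback k mp).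
Qed.

Lemma measurable_fun_kernel_singleton {d d' : measure_display}
    {X : measurableType d} {Y : measurableType d'} {R : realType}
    (k : R.-fker X ~> Y) :
  measurable [set z : Y * Y | z.1 = z.2] ->
  measurable_fun [set: Y * X] (fun z => k z.2 [set z.1]).
Proof.
move=> mdiag.
pose A := [set u : Y * X * Y | u.1.1 = u.2].
have mA : measurable A.
  have mf : measurable_fun [set: Y * X * Y] (fun u => (u.1.1, u.2)).
    by apply: measurable_fun_pair => //; exact: measurableT_comp.
  by have := mf measurableT _ mdiag; rewrite setTI.
have -> : (fun z : Y * X => k z.2 [set z.1]) =
    (fun z => kpullback k (@measurable_snd _ _ Y X) z (xsection A z)).
  apply/funext => z; congr (k z.2 _).
  by apply/seteqP; split => y; rewrite /xsection /= inE.
by apply: (measurable_fun_xsection_finite_kernel (kpullback k _)); rewrite inE.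
Qed.

Lemma cm_eval_isolated {X : choiceType} (a : cmeas X) (B : set X) (x : X) :
  B x -> (forall y, y \in finsupp a -> B y -> y = x) -> cm_eval a B = a x.
Proof.
move=> Bx isoB; rewrite /cm_eval big_seq_cond.
rewrite (eq_bigl (fun y => (y \in finsupp a) && (y == x))); last first.
  move=> y; apply/andP/andP => -[ya yB]; split=> //.
    by apply/eqP/isoB; rewrite // -inE.
  by rewrite (eqP yB) inE.
have [xa|xNa] := boolP (x \in finsupp a).
  by rewrite -big_seq_cond -big_filter filter_pred1_uniq // big_seq1.
rewrite big1 ?fsfun_dflt // => y /andP[ya /eqP yx].
by move: xNa; rewrite -yx ya.
Qed.

Lemma measurable_cm_eval_eq {X : topologicalType} (B : set X) :
  borel_set B ->
  measurable [set z : Mf X * Mf X | cm_eval z.1 B = cm_eval z.2 B].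
Proof.
move=> bB; pose ev (mu : Mf X) := cm_eval mu B.
have mev n : measurable (ev @^-1` [set n]).
  by apply: sub_sigma_algebra; exists B, [set n].
have -> : [set z : Mf X * Mf X | ev z.1 = ev z.2] =
    \bigcup_n (ev @^-1` [set n] `*` ev @^-1` [set n]).
  apply/seteqP; split => [z /= ez|z [n _ [/= <- <-]]] //.
  by exists (ev z.1) => //; split.
by apply: bigcupT_measurable => n; exact: measurableX.
Qed.

Definition isolating {X : choiceType} (B : nat -> nat -> set X) : Prop :=
  forall (s : seq X) (x : X),
    exists i j, B i j x /\ forall y, y \in s -> B i j y -> y = x.

Lemma isolating_measurable_Mf_diag {X : topologicalType}
    (B : nat -> nat -> set X) :
  (forall i j, borel_set (B i j)) -> isolating B ->
  measurable [set z : Mf X * Mf X | z.1 = z.2].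
Proof.
move=> bB isoB.
have -> : [set z : Mf X * Mf X | z.1 = z.2] = \bigcap_i \bigcap_j
    [set z : Mf X * Mf X | cm_eval z.1 (B i j) = cm_eval z.2 (B i j)].
  apply/seteqP; split => [[a b] /= -> //|[a b] /= eab].
  apply/fsfunP => x.
  have [i [j [Bx isoBx]]] := isoB (finsupp a ++ finsupp b) x.
  have evB (c : cmeas X) : {subset finsupp c <= finsupp a ++ finsupp b} ->
      cm_eval c (B i j) = c x.
    by move=> sc; apply: cm_eval_isolated => // y /sc; exact: isoBx.
  by rewrite -evB ?(eab i I j I) ?evB // => y yc; rewrite mem_cat yc ?orbT.
by apply: bigcapT_measurable => i; apply: bigcapT_measurable => j;
  exact: measurable_cm_eval_eq.
Qed.

Section separable_metric.
Context {R : realType} {X : topologicalType} (dist : X -> X -> R).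
Hypotheses (dist_ge0 : forall x y, 0 <= dist x y)
  (dist_eq0 : forall x y, dist x y = 0 <-> x = y)
  (distC : forall x y, dist x y = dist y x)
  (dist_triangle : forall x y z, dist x z <= dist x y + dist y z)
  (dist_open : forall A : set X,
     (forall x, A x -> exists2 e : R, 0 < e & [set y | dist x y < e] `<=` A) ->
     open A).
Variables (D : set X) (code : X -> nat).
Hypotheses (code_inj : {in D &, injective code})
  (D_dense : closure D = [set: X]).

Definition dist_ball (c : X) (r : R) : set X := [set y | dist c y < r].

Lemma dist_ball_open c r : open (dist_ball c r).
Proof.
apply: dist_open => y; rewrite /dist_ball /= => cy.
exists (r - dist c y); first by rewrite subr_gt0.
by move=> z /= yz; have := dist_triangle c y z; lra.
Qed.

Definition coded_ball (i j : nat) : set X :=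
  \bigcup_(c in [set c | D c /\ code c = i]) dist_ball c j.+1%:R^-1.

Lemma coded_ball_open i j : open (coded_ball i j).
Proof. by apply: bigcup_open => c _; exact: dist_ball_open. Qed.

Lemma isolating_radius (s : seq X) (x : X) :
  exists2 e : R, 0 < e & forall y, y \in s -> y != x -> e < dist x y.
Proof.
elim: s => [|y s [e e0 se]]; first by exists 1 => //.
have [->|yx] := eqVneq y x.
  by exists e => // z; rewrite inE => /predU1P[->|/se]; rewrite ?eqxx.
have xy0 : 0 < dist x y.
  by rewrite lt_def dist_ge0 andbT; apply: contra_neq yx => /dist_eq0.
exists (Num.min e (dist x y / 2)); first by rewrite lt_min e0 divr_gt0.
move=> z; rewrite inE gt_min => /predU1P[-> _|zs zx]; last by rewrite se.
by apply/orP; right; lra.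
Qed.

Lemma coded_ball_isolating : isolating coded_ball.
Proof.
move=> s x; have [e e0 se] := isolating_radius s x.
have e20 : 0 < e / 2 by rewrite divr_gt0.
have [j _ /(_ j (leqnn j)) /= je] := near_infty_natSinv_lt (PosNum e20).
set r : R := j.+1%:R^-1 in je *.
have [c Dc xc] : exists2 c, D c & dist x c < r.
  have : closure D x by rewrite D_dense.
  move=> /(_ (dist_ball x r)) [|c [Dc xc]]; last by exists c.
  apply: open_nbhs_nbhs; split; first exact: dist_ball_open.
  by rewrite /dist_ball /= (proj2 (dist_eq0 x x)) // invr_gt0 ltr0n.
exists (code c), j; split; first by exists c => //; rewrite /dist_ball /= distC.
move=> y ys [c' [Dc' cc'] /=]; rewrite -/r => c'y.
have c'c : c' = c by apply: code_inj; rewrite ?inE.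
rewrite {}c'c in c'y.
apply/eqP/negPn/negP => yx; rewrite /dist_ball /= in c'y.
by have := se y ys yx; have := dist_triangle x c y; clearbody r; lra.
Qed.

End separable_metric.

Lemma polish_Mf_diag {R : realType} {X : topologicalType} :
  polish R X -> measurable [set z : Mf X * Mf X | z.1 = z.2].
Proof.
move=> [[D [cD D_dense]] [dist [d0 [dE [dC [dT [dO _]]]]]]].
have [code code_inj] := countable_injP _ cD.
have dopen A := (dO A).2.
apply: (isolating_measurable_Mf_diag (coded_ball dist D code)).
  by move=> i j; apply: sub_sigma_algebra; exact: (coded_ball_open _ dT dopen).
exact: (coded_ball_isolating _ d0 dE dC dT dopen _ _ code_inj D_dense).
Qed.

Ltac measurable_tuple := repeat first
  [ exact: measurable_cst | exact: measurable_id
  | exact: measurable_fst | exact: measurable_snd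
  | apply: measurable_fun_pair
  | apply: (measurableT_comp measurable_fst)
  | apply: (measurableT_comp measurable_snd) ].

Lemma integral_singleton_swap {d : measure_display} {Y : measurableType d}
    {R : realType} (mu nu : {sigma_finite_measure set Y -> \bar R})
    (f : Y -> R) :
  measurable [set z : Y * Y | z.1 = z.2] ->
  (forall y, 0 <= f y) -> measurable_fun [set: Y] f ->
  (\int[mu]_y ((f y)%:E * nu [set y]) = \int[nu]_y ((f y)%:E * mu [set y]))%E.
Proof.
move=> mdiag f0 mf; pose diag := [set z : Y * Y | z.1 = z.2].
have mdiag_indic : measurable_fun [set: Y * Y]
    (fun z => (\1_diag z)%:E : \bar R).
  by apply/measurable_EFinP; exact: measurable_indic.
have massE (la : {measure set Y -> \bar R}) y :
    la [set y] = (\int[la]_y' (\1_diag (y, y'))%:E)%E.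
  have -> : [set y] = xsection diag y.
    by apply/seteqP; split => y'; rewrite /xsection /= inE.
  rewrite -[xsection _ _]setIT -integral_indic //;
    last exact: measurable_xsection.
  by apply: eq_integral => y' _; rewrite !indicE mem_xsection.
have mfdiag : measurable_fun [set: Y * Y]
    (fun z => (f z.1 * \1_diag z)%:E : \bar R).
  apply/measurable_EFinP; apply: measurable_funM; last exact: measurable_indic.
  exact: measurableT_comp.
have fdiag0 z : (0 <= (f z.1 * \1_diag z)%:E)%E by rewrite lee_fin mulr_ge0.
transitivity (\int[mu]_y \int[nu]_y' (f y * \1_diag (y, y'))%:E)%E.
  apply: eq_integral => y _; rewrite massE -ge0_integralZl ?lee_fin //.
  by apply: measurableT_comp mdiag_indic _; measurable_tuple.
transitivity (\int[nu]_y' \int[mu]_y (f y * \1_diag (y, y'))%:E)%E.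
  exact: (fubini_tonelli _ mfdiag fdiag0).
apply: eq_integral => y' _.
rewrite massE -ge0_integralZl ?lee_fin //; last first.
  by apply: measurableT_comp mdiag_indic _; measurable_tuple.
apply: eq_integral => y _; rewrite -EFinM !indicE.
have [<-|yy'] := eqVneq y y'; first by [].
by rewrite !memNset ?mulr0 //= => [/esym|] /eqP; rewrite (negbTE yy').
Qed.

Section condensation.
Context {d : measure_display} {M : measurableType d} {R : realType}.
Context {P P' : {measure set M -> \bar R}} {T Q : R.-pker M ~> M}.
Hypothesis disintegration : forall g : M * M -> \bar R,
  (forall z, 0 <= g z)%E -> measurable_fun [set: M * M] g ->
  (\int[P]_mu \int[T mu]_eta g (eta, mu) =
   \int[P']_eta \int[Q eta]_mu g (eta, mu))%E.

Lemma condensation_swap (H : M * M * M -> \bar R) :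
  (forall z, 0 <= H z)%E -> measurable_fun [set: M * M * M] H ->
  (\int[P']_k \int[Q k]_m \int[T m]_l H (k, m, l) =
   \int[P']_l \int[Q l]_m \int[T m]_k H (k, m, l))%E.
Proof.
move=> H0 mH.
pose H1 (km : M * M) := (\int[T km.2]_l H (km, l))%E.
pose H2 (lm : M * M) := (\int[T lm.2]_k H (k, lm.2, lm.1))%E.
have mH1 : measurable_fun [set: M * M] H1.
  exact: (measurable_fun_integral_kernel_comp T measurable_snd H0 mH).
have mH2 : measurable_fun [set: M * M] H2.
  apply: (measurable_fun_integral_kernel_comp T _
    (h := fun w => H (w.2, w.1.2, w.1.1))) => //.
  by apply: measurableT_comp mH _; measurable_tuple.
have H10 z : (0 <= H1 z)%E by exact: integral_ge0.
have H20 z : (0 <= H2 z)%E by exact: integral_ge0.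
transitivity (\int[P']_k \int[Q k]_m H1 (k, m))%E; first by [].
rewrite -disintegration //.
transitivity (\int[P]_m \int[T m]_l H2 (l, m))%E; last exact: disintegration.
apply: eq_integral => m _.
apply: (pkernel_fubini_tonelli T T m m (fun kl => H (kl.1, m, kl.2))) => //.
by apply: measurableT_comp mH _; measurable_tuple.
Qed.

Lemma condensation_recentre (F : M * M * M * M -> \bar R) :
  (forall z, 0 <= F z)%E -> measurable_fun [set: M * M * M * M] F ->
  (\int[P']_k \int[Q k]_m \int[T m]_l \int[Q l]_n F (k, m, l, n) =
   \int[P']_l \int[Q l]_m \int[Q l]_n \int[T m]_k F (k, m, l, n))%E.
Proof.
move=> F0 mF.
pose H (kml : M * M * M) := (\int[Q kml.2]_n F (kml, n))%E.
have mH : measurable_fun [set: M * M * M] H.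
  exact: (measurable_fun_integral_kernel_comp Q measurable_snd F0 mF).
have H0 z : (0 <= H z)%E by exact: integral_ge0.
transitivity (\int[P']_k \int[Q k]_m \int[T m]_l H (k, m, l))%E; first by [].
rewrite (condensation_swap _ H0 mH).
apply: eq_integral => l _; apply: eq_integral => m _.
apply: (pkernel_fubini_tonelli T Q m l (fun kn => F (kn.1, m, l, kn.2))) => //.
by apply: measurableT_comp mF _; measurable_tuple.
Qed.

Hypothesis mdiag : measurable [set z : M * M | z.1 = z.2].

Lemma measurable_fun_weighted_mass {d' : measure_display}
    {A : measurableType d'} {h : A -> R} {p : A -> M * M} :
  measurable_fun [set: A] h -> measurable_fun [set: A] p ->
  measurable_fun [set: A] (fun a => (h a)%:E * T (p a).2 [set (p a).1])%E.
Proof.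
move=> mh mp; apply: emeasurable_funM; first exact/measurable_EFinP.
exact: measurableT_comp (measurable_fun_kernel_singleton T mdiag) mp.
Qed.

Lemma condensation_recentre_mass (h : M * M * M * M -> R) :
  (forall z, 0 <= h z) -> measurable_fun [set: M * M * M * M] h ->
  (\int[P']_k \int[Q k]_m \int[T m]_l \int[Q l]_n
      ((h (k, m, l, n))%:E * T n [set k]) =
   \int[P']_l \int[Q l]_m \int[Q l]_n \int[T m]_k
      ((h (k, m, l, n))%:E * T n [set k]))%E.
Proof.
move=> h0 mh; pose F z := ((h z)%:E * T z.2 [set z.1.1.1])%E.
have F0 z : (0 <= F z)%E by rewrite mule_ge0 ?lee_fin.
have mF : measurable_fun [set: M * M * M * M] F.
  apply: (measurable_fun_weighted_mass (p := fun z => (z.1.1.1, z.2))) => //.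
  by measurable_tuple.
exact: (condensation_recentre _ F0 mF).
Qed.

Lemma condensation_symmetric (g : M * M * M * M -> R) :
  (forall z, 0 <= g z) -> measurable_fun [set: M * M * M * M] g ->
  (\int[P']_kappa \int[Q kappa]_mu \int[T mu]_lambda \int[Q lambda]_nu
      ((g (kappa, mu, lambda, nu))%:E * T nu [set kappa]) =
   \int[P']_kappa \int[Q kappa]_nu \int[T nu]_lambda \int[Q lambda]_mu
      ((g (kappa, mu, lambda, nu))%:E * T mu [set kappa]))%E.
Proof.
move=> g0 mg.
pose g' (z : M * M * M * M) := g (z.1.1.1, z.2, z.1.2, z.1.1.2).
have g'0 z : 0 <= g' z := g0 _.
have mg' : measurable_fun [set: M * M * M * M] g'.
  by apply: measurableT_comp mg _; measurable_tuple.
transitivity (\int[P']_l \int[Q l]_m \int[Q l]_n \int[T m]_k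
    ((g (k, m, l, n))%:E * T n [set k]))%E.
  exact: (condensation_recentre_mass _ g0 mg).
transitivity (\int[P']_l \int[Q l]_n \int[Q l]_m \int[T n]_k
    ((g (k, m, l, n))%:E * T m [set k]))%E;
  last exact/esym/(condensation_recentre_mass _ g'0 mg').
apply: eq_integral => l _.
pose J (w : M * M * M) := ((g (w.2, w.1.1, l, w.1.2))%:E * T w.1.2 [set w.2])%E.
have J0 w : (0 <= J w)%E by rewrite mule_ge0 ?lee_fin.
have mJ : measurable_fun [set: M * M * M] J.
  apply: (measurable_fun_weighted_mass (p := fun w => (w.2, w.1.2))).
    by apply: measurableT_comp mg _; measurable_tuple.
  by measurable_tuple.
transitivity (\int[Q l]_n \int[Q l]_m \int[T m]_k J (m, n, k))%E.
  apply: (pkernel_fubini_tonelli Q Q l l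
    (fun mn => \int[T mn.1]_k J (mn, k))%E).
    exact: (measurable_fun_integral_kernel_comp T measurable_fst J0 mJ).
  by move=> mn; exact: integral_ge0.
apply: eq_integral => n _; apply: eq_integral => m _.
apply: (integral_singleton_swap (pker_at T m) (pker_at T n) _ mdiag) => //.
by apply: measurableT_comp mg _; measurable_tuple.
Qed.

End condensation.

Theorem mainTheorem8 (R : realType) (X : topologicalType)
    (P : probability (Mf X) R) (T : R.-pker (Mf X) ~> (Mf X))
    (P' : probability (Mf X) R) (Q : R.-pker (Mf X) ~> (Mf X)) :
  polish R X ->
  thinning_kernel T ->
  thinning_of P T P' ->
  condensation_kernel P T P' Q ->
  forall g : (Mf X * Mf X * Mf X * Mf X)%type -> R,
    (forall z, 0 <= g z) ->
    measurable_fun [set: (Mf X * Mf X * Mf X * Mf X)%type] g ->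
    (\int[P']_kappa \int[Q kappa]_mu \int[T mu]_lambda \int[Q lambda]_nu
        ((g (kappa, mu, lambda, nu))%:E * T nu [set kappa]) =
     \int[P']_kappa \int[Q kappa]_nu \int[T nu]_lambda \int[Q lambda]_mu
        ((g (kappa, mu, lambda, nu))%:E * T mu [set kappa]))%E.
Proof.
move=> polishX _ _ [_ disintegration].
exact: condensation_symmetric disintegration (polish_Mf_diag polishX).
Qed.
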